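(* Let $m,n$ be positive integers, $A\in\mathbb{C}^{n\times n}$, $B\in\mathbb{C}^{n\times m}$ with $\operatorname{rank}(B)=m$, $(A,B)$ reachable and all eigenvalues of $A$ of modulus $<1$. Let $\mathbf{R}\in\mathbb{C}^{n\times n}$ be Hermitian with $\mathbf{R}\geq0$ and $\mathbf{R}-A\mathbf{R}A^*=BH+H^*B^*$ for some $H\in\mathbb{C}^{m\times n}$. Let $\Omega$ be the $\mathbb{H}_m$-minimal value of $q_{\mathbf{R}}(\Gamma)=\Gamma\mathbf{R}\Gamma^*$ over $\Gamma\in\mathbb{C}^{m\times n}$ subject to $\Gamma B=I_m$. If $\Omega>0$ then $\mathbf{R}>0$.
   Context: $\mathbb{H}_m$ is the space of $m\times m$ Hermitian matrices partially ordered by $X\geq Y$ iff $X-Y$ is nonnegative definite. The $\mathbb{H}_m$-minimal value is $q_{\mathbf{R}}(\Gamma_0)$ for some $\Gamma_0$ with $\Gamma_0B=I_m$ and $q_{\mathbf{R}}(\Gamma_0)\leq q_{\mathbf{R}}(\Gamma)$ for all $\Gamma$ with $\Gamma B=I_m$ (such a least element exists). $(A,B)$ reachable means $\operatorname{rank}[B,AB,\dots,A^{n-1}B]=n$. *)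

From HB Require Import structures.
From mathcomp Require Import all_boot all_order all_algebra.
From mathcomp Require Import complex.
From mathcomp Require Import reals.
Set Implicit Arguments. Unset Strict Implicit. Unset Printing Implicit Defensive.
Import Order.TTheory GRing.Theory Num.Theory.
Local Open Scope ring_scope.

Definition ctmx (C : numClosedFieldType) m n (M : 'M[C]_(m, n)) : 'M[C]_(n, m) :=
  (map_mx Num.conj M)^T.

Definition qf (C : numClosedFieldType) n (M : 'M[C]_n) (v : 'cV[C]_n) : C :=
  (ctmx v *m M *m v) 0 0.

Definition herm_mx (C : numClosedFieldType) n (M : 'M[C]_n) : Prop :=
  ctmx M = M.

Definition psd (C : numClosedFieldType) n (M : 'M[C]_n) : Prop :=
  forall v : 'cV[C]_n, 0 <= qf M v.

Definition pd (C : numClosedFieldType) n (M : 'M[C]_n) : Prop :=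
  forall v : 'cV[C]_n, v != 0 -> 0 < qf M v.

(* Loewner order on H_m: X <= Y iff Y - X is nonnegative definite *)
Definition loewner_le (C : numClosedFieldType) n (X Y : 'M[C]_n) : Prop :=
  psd (Y - X).

Definition qR (C : numClosedFieldType) m n (Rm : 'M[C]_n) (G : 'M[C]_(m, n)) : 'M[C]_m :=
  G *m Rm *m ctmx G.

Definition reach_mx (C : numClosedFieldType) n m (A : 'M[C]_n) (B : 'M[C]_(n, m)) :=
  \mxrow_(k < n) (A ^+ k *m B).

Definition reachable (C : numClosedFieldType) n m (A : 'M[C]_n) (B : 'M[C]_(n, m)) : Prop :=
  \rank (reach_mx A B) = n.

(* If [R v = 0] and [w := B^* v] were nonzero, then [Gamma0 + Omega w v^*] would have
   the same [q_R]-value [Omega] as [Gamma0] but send [B] to [N := 1 + Omega w w^*];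
   renormalising by [N^-1] gives a feasible [Gamma] with [q_R Gamma = N^-1 Omega N^-*],
   and minimality yields [N Omega N^* <= Omega], which fails at [w] because
   [N^* w = (1 + w^* Omega w) w].  Hence [ker R] lies in [ker B^*]; by the Stein
   equation it is [A^*]-invariant, so it is orthogonal to every [A^k B], and
   reachability makes it trivial. *)
From HB Require Import structures.
From mathcomp Require Import all_boot all_order all_algebra.
From mathcomp Require Import complex.
From mathcomp Require Import reals.
From mathcomp Require Import ring.
Set Implicit Arguments. Unset Strict Implicit. Unset Printing Implicit Defensive.
Import Order.TTheory GRing.Theory Num.Theory.
Local Open Scope ring_scope.

Section ConjTranspose.
Variable C : numClosedFieldType.

Lemma ctmxK m n (M : 'M[C]_(m, n)) : ctmx (ctmx M) = M.
Proof. by apply/matrixP=> i j; rewrite !mxE conjCK. Qed.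

Lemma ctmxM m n p (M : 'M[C]_(m, n)) (N : 'M[C]_(n, p)) :
  ctmx (M *m N) = ctmx N *m ctmx M.
Proof. by rewrite /ctmx (map_mxM Num.Def.conjC) trmx_mul. Qed.

Lemma ctmxD m n (M N : 'M[C]_(m, n)) : ctmx (M + N) = ctmx M + ctmx N.
Proof. by apply/matrixP=> i j; rewrite !mxE rmorphD. Qed.

Lemma ctmxB m n (M N : 'M[C]_(m, n)) : ctmx (M - N) = ctmx M - ctmx N.
Proof. by apply/matrixP=> i j; rewrite !mxE rmorphB. Qed.

Lemma ctmxZ m n a (M : 'M[C]_(m, n)) : ctmx (a *: M) = a^* *: ctmx M.
Proof. by apply/matrixP=> i j; rewrite !mxE rmorphM. Qed.

Lemma ctmx0 m n : ctmx (0 : 'M[C]_(m, n)) = 0.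
Proof. by apply/matrixP=> i j; rewrite !mxE rmorph0. Qed.

Lemma ctmx1 n : ctmx (1%:M : 'M[C]_n) = 1%:M.
Proof. by apply/matrixP=> i j; rewrite !mxE rmorphMn rmorph1 eq_sym. Qed.

Lemma ctmx_inj m n : injective (@ctmx C m n).
Proof. by move=> M N hMN; rewrite -[M]ctmxK hMN ctmxK. Qed.

Lemma herm_qR m n (Rm : 'M[C]_n) (G : 'M[C]_(m, n)) :
  herm_mx Rm -> herm_mx (qR Rm G).
Proof. by rewrite /herm_mx /qR => hR; rewrite !ctmxM ctmxK hR mulmxA. Qed.

Lemma cV_normsq_ge0 n (w : 'cV[C]_n) : 0 <= (ctmx w *m w) 0 0.
Proof. by rewrite !mxE sumr_ge0 // => i _; rewrite !mxE mulrC mul_conjC_ge0. Qed.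

Lemma cV_normsq_eq0 n (w : 'cV[C]_n) : (ctmx w *m w) 0 0 = 0 -> w = 0.
Proof.
have ge0 k : predT k -> 0 <= ctmx w 0 k * w k 0.
  by move=> _; rewrite !mxE mulrC mul_conjC_ge0.
rewrite !mxE => /(psumr_eq0P ge0) w0; apply/matrixP=> i j; rewrite (ord1 j) mxE.
by have /eqP := w0 i isT; rewrite !mxE mulrC mul_conjC_eq0 => /eqP.
Qed.

Lemma qR_mulmx p m n (Rm : 'M[C]_n) (M : 'M[C]_(p, m)) (G : 'M[C]_(m, n)) :
  qR Rm (M *m G) = M *m qR Rm G *m ctmx M.
Proof. by rewrite /qR ctmxM !mulmxA. Qed.

Lemma qR_addr_ker m n (Rm : 'M[C]_n) (G K : 'M[C]_(m, n)) :
  herm_mx Rm -> K *m Rm = 0 -> qR Rm (G + K) = qR Rm G.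
Proof.
move=> hR KR0; have RK0 : Rm *m ctmx K = 0 by rewrite -hR -ctmxM KR0 ctmx0.
by rewrite /qR ctmxD mulmxDl KR0 addr0 mulmxDr -[_ *m ctmx K]mulmxA RK0 mulmx0 addr0.
Qed.

End ConjTranspose.

Lemma sherman_morrison (F : fieldType) m (x : 'cV[F]_m) (y : 'rV[F]_m) (c : F) :
  y *m x = c%:M -> 1 + c != 0 ->
  (1%:M - (1 + c)^-1 *: (x *m y)) *m (1%:M + x *m y) = 1%:M.
Proof.
move=> yx c1; rewrite mulmxDr mulmx1 mulmxBl mul1mx -scalemxAl.
rewrite -[x *m y *m (x *m y)]mulmxA [y *m (x *m y)]mulmxA yx mul_scalar_mx.
rewrite -!scalemxAr scalerA -addrA -[X in _ + (X - _)]scale1r -scalerBl.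
rewrite -scaleNr -scalerDl.
suff -> : - (1 + c)^-1 + (1 - (1 + c)^-1 * c) = 0 by rewrite scale0r addr0.
by field.
Qed.

Section QuadraticForms.
Variable C : numClosedFieldType.

Lemma qf_congr m n (P : 'M[C]_(m, n)) (X : 'M[C]_n) (y : 'cV[C]_m) :
  qf (P *m X *m ctmx P) y = qf X (ctmx P *m y).
Proof. by rewrite /qf ctmxM ctmxK !mulmxA. Qed.

Lemma qfZ n (X : 'M[C]_n) (a : C) (y : 'cV[C]_n) :
  qf X (a *: y) = a^* * a * qf X y.
Proof.
by rewrite /qf ctmxZ -scalemxAr -scalemxAl -scalemxAl scalerA mxE [a * _]mulrC.
Qed.

Lemma qfD n (X Y : 'M[C]_n) (y : 'cV[C]_n) : qf (X + Y) y = qf X y + qf Y y.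
Proof. by rewrite /qf mulmxDr mulmxDl mxE. Qed.

Lemma qfB n (X Y : 'M[C]_n) (y : 'cV[C]_n) : qf (X - Y) y = qf X y - qf Y y.
Proof. by rewrite /qf mulmxBr mulmxBl [in LHS]mxE [in X in _ + X]mxE. Qed.

Lemma loewner_le_congr m n (P : 'M[C]_(m, n)) (X Y : 'M[C]_n) :
  loewner_le X Y -> loewner_le (P *m X *m ctmx P) (P *m Y *m ctmx P).
Proof. by move=> XY y; rewrite -mulmxBl -mulmxBr qf_congr; apply: XY. Qed.

Lemma psd_ker n (M : 'M[C]_n) (v : 'cV[C]_n) :
  herm_mx M -> psd M -> qf M v = 0 -> M *m v = 0.
Proof.
move=> hM M_psd qv0; set w := M *m v; apply: cV_normsq_eq0.
set a := (ctmx w *m w) 0 0; set q := qf M w.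
have a_ge0 : 0 <= a by apply: cV_normsq_ge0.
have q_ge0 : 0 <= q by apply: M_psd.
have qf_shift s : s^* = s -> qf M (v - s *: w) = s * s * q - (s + s) * a.
  move=> sR; move: qv0; rewrite /qf ctmxB ctmxZ sR !mulmxBl !mulmxBr.
  rewrite -!scalemxAl -!scalemxAr scalerA; set x := ctmx v *m M *m v => x0.
  have vM : ctmx v *m M = ctmx w by rewrite /w ctmxM hM.
  rewrite vM -[ctmx w *m M *m v]mulmxA -/w /a /q /qf.
  set y := ctmx w *m w; set z := ctmx w *m M *m w; clearbody x y z.
  by rewrite !mxE x0; ring.
have [//|a_neq0] := eqVneq a 0.
have q1_gt0 : 0 < q + 1 by rewrite ltr_wpDl.
have s_ge0 : 0 <= a / (q + 1) by rewrite divr_ge0 // ltW.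
have := M_psd (v - (a / (q + 1)) *: w).
rewrite qf_shift; last exact/CrealP/ger0_real.
have -> : a / (q + 1) * (a / (q + 1)) * q - (a / (q + 1) + a / (q + 1)) * a =
          - (a * a * (q + 2%:R) / ((q + 1) * (q + 1))).
  by field; rewrite lt0r_neq0.
rewrite oppr_ge0 => le0.
have a_gt0 : 0 < a by rewrite lt_def a_neq0.
have : 0 < a * a * (q + 2%:R) / ((q + 1) * (q + 1)).
  by rewrite divr_gt0 ?mulr_gt0 ?ltr_wpDl.
by move/lt_le_trans/(_ le0); rewrite ltxx.
Qed.

End QuadraticForms.

Section MinimalValue.
Variables (C : numClosedFieldType) (m n : nat).
Variables (B : 'M[C]_(n, m)) (Rm : 'M[C]_n) (Gamma0 : 'M[C]_(m, n)).
Hypothesis min_Gamma0 : forall Gamma : 'M[C]_(m, n), Gamma *m B = 1%:M ->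
  loewner_le (qR Rm Gamma0) (qR Rm Gamma).

Lemma min_qR_congr_le (G : 'M[C]_(m, n)) (N M : 'M[C]_m) :
  G *m B = N -> M *m N = 1%:M ->
  loewner_le (N *m qR Rm Gamma0 *m ctmx N) (qR Rm G).
Proof.
move=> GB MN; have /mulmx1C NM := MN.
have /(loewner_le_congr N) : loewner_le (qR Rm Gamma0) (qR Rm (M *m G)).
  by apply: min_Gamma0; rewrite -mulmxA GB.
suff -> : N *m qR Rm (M *m G) *m ctmx N = qR Rm G by [].
rewrite qR_mulmx; move: (qR Rm G) => X.
by rewrite !mulmxA NM mul1mx -mulmxA -ctmxM NM ctmx1 mulmx1.
Qed.

Hypothesis Rm_herm : herm_mx Rm.
Hypothesis Gamma0B : Gamma0 *m B = 1%:M.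
Hypothesis Omega_pd : pd (qR Rm Gamma0).

Lemma min_qR_ker (v : 'cV[C]_n) : Rm *m v = 0 -> ctmx B *m v = 0.
Proof.
move=> Rv0; have [//|w_neq0] := eqVneq (ctmx B *m v) 0.
set w := ctmx B *m v in w_neq0 *; pose Omega := qR Rm Gamma0.
set c := qf Omega w; have c_gt0 : 0 < c by apply: Omega_pd.
have c1_gt0 : 0 < 1 + c by rewrite addr_gt0.
have c1R : (1 + c)^* = 1 + c by apply/CrealP/gtr0_real.
have wOw : ctmx w *m Omega *m w = c%:M by apply: mx11_scalar.
set N := 1%:M + Omega *m w *m ctmx w.
have vR0 : ctmx v *m Rm = 0 by rewrite -Rm_herm -ctmxM Rv0 ctmx0.
have GB : (Gamma0 + Omega *m w *m ctmx v) *m B = N.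
  by rewrite mulmxDl Gamma0B -mulmxA -[ctmx v *m B]ctmxK ctmxM ctmxK.
have qRG : qR Rm (Gamma0 + Omega *m w *m ctmx v) = Omega.
  by apply: qR_addr_ker => //; rewrite -mulmxA vR0 mulmx0.
have MN : (1%:M - (1 + c)^-1 *: (Omega *m w *m ctmx w)) *m N = 1%:M.
  by apply: sherman_morrison; [rewrite mulmxA wOw | rewrite lt0r_neq0].
have Nw : ctmx N *m w = (1 + c) *: w.
  have OmegaH : ctmx Omega = Omega by apply: herm_qR.
  rewrite ctmxD ctmx1 (ctmxM (Omega *m w)) ctmxK (ctmxM Omega) OmegaH mulmxDl mul1mx.
  by rewrite -(mulmxA w) wOw mul_mx_scalar scalerDl scale1r.
have := min_qR_congr_le GB MN w; rewrite qRG qfB qf_congr Nw qfZ.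
rewrite c1R; change (0 <= c - (1 + c) * (1 + c) * c -> w = 0).
have -> : c - (1 + c) * (1 + c) * c = - (c * c * (2%:R + c)) by ring.
rewrite oppr_ge0 => le0.
have : 0 < c * c * (2%:R + c) by rewrite !mulr_gt0 // addr_gt0.
by move/lt_le_trans/(_ le0); rewrite ltxx.
Qed.

End MinimalValue.

Lemma stein_ker (C : numClosedFieldType) m n (A Rm : 'M[C]_n) (B : 'M[C]_(n, m))
    (H : 'M[C]_(m, n)) (v : 'cV[C]_n) :
  Rm - A *m Rm *m ctmx A = B *m H + ctmx H *m ctmx B ->
  herm_mx Rm -> psd Rm -> Rm *m v = 0 -> ctmx B *m v = 0 ->
  Rm *m (ctmx A *m v) = 0.
Proof.
move=> stein Rm_herm Rm_psd Rv0 Bv0; apply: psd_ker => //; rewrite -qf_congr.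
have -> : A *m Rm *m ctmx A = Rm - (B *m H + ctmx H *m ctmx B).
  by rewrite -stein opprB addrC subrK.
have vB0 : ctmx v *m B = 0 by rewrite -[B]ctmxK -ctmxM Bv0 ctmx0.
have vRv : ctmx v *m Rm *m v = 0 by rewrite -mulmxA Rv0 mulmx0.
have vBHv : ctmx v *m (B *m H) *m v = 0 by rewrite mulmxA vB0 !mul0mx.
have vHBv : ctmx v *m (ctmx H *m ctmx B) *m v = 0 by rewrite -!mulmxA Bv0 !mulmx0.
by rewrite qfB qfD /qf vRv vBHv vHBv !mxE addr0 subr0.
Qed.

Lemma reachable_ortho_eq0 (C : numClosedFieldType) m n (A : 'M[C]_n)
    (B : 'M[C]_(n, m)) (v : 'cV[C]_n) :
  reachable A B -> (forall k, ctmx (A ^+ k *m B) *m v = 0) -> v = 0.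
Proof.
move=> reachAB ortho; have free : row_free (reach_mx A B) by rewrite /row_free reachAB.
apply: ctmx_inj; rewrite ctmx0; apply: (row_free_inj free); rewrite mul0mx.
rewrite /reach_mx mul_mxrow -(mxrow0 1); apply: eq_mxrow => k.
by rewrite -[X in X = _]ctmxK ctmxM ctmxK ortho ctmx0.
Qed.

Local Open Scope complex_scope.

Theorem proposition2 (R : realType) (m n : nat) (hm : (0 < m)%N) (hn : (0 < n)%N)
  (A : 'M[R[i]]_n) (B : 'M[R[i]]_(n, m))
  (hrkB : \rank B = m)
  (hreach : reachable A B)
  (hstab : forall lam : R[i], eigenvalue A lam -> `|lam| < 1)
  (Rm : 'M[R[i]]_n) (hRherm : herm_mx Rm) (hRpsd : psd Rm)
  (hstein : exists H : 'M[R[i]]_(m, n),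
      Rm - A *m Rm *m ctmx A = B *m H + ctmx H *m ctmx B)
  (Gamma0 : 'M[R[i]]_(m, n)) (hG0 : Gamma0 *m B = 1%:M)
  (hmin : forall Gamma : 'M[R[i]]_(m, n), Gamma *m B = 1%:M ->
      loewner_le (qR Rm Gamma0) (qR Rm Gamma))
  (hOmega : pd (qR Rm Gamma0)) :
  pd Rm.
Proof.
have [H stein] := hstein.
have kerB := min_qR_ker hmin hRherm hG0 hOmega.
have kerA (v : 'cV_n) : Rm *m v = 0 -> Rm *m (ctmx A *m v) = 0.
  by move=> Rv0; apply: stein_ker stein hRherm hRpsd Rv0 (kerB v Rv0).
move=> v v_neq0; rewrite lt_def hRpsd andbT; apply: contraNneq v_neq0 => qv0.
have Rv0 : Rm *m v = 0 by apply: psd_ker.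
have kerAk k : Rm *m (ctmx (A ^+ k) *m v) = 0.
  elim: k => [|k IH]; first by rewrite expr0 ctmx1 mul1mx.
  by rewrite exprSr -mulmxE ctmxM -mulmxA kerA.
apply/eqP/(reachable_ortho_eq0 hreach) => k.
rewrite ctmxM -mulmxA; exact: kerB.
Qed.
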